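(* Let $(s_1,\dots,s_n)$ be an abstract of degree $m$ with $s_1=1$, and let $(s_i,a_i,b_i)_{1\le i\le n}$ be any associated history. Then $$\#\{1\le i<n:\varpi_i=0\}\le\tfrac14n+\tfrac34m.$$
   Context: Fix $m_0\ge1$. An abstract of degree $m\in\{0,\dots,m_0\}$ is a sequence $(s_1,\dots,s_n)\in\{\pm1\}^n$ with $m+\sum_{i=1}^ns_i=0$ and $0<m+\sum_{i=1}^js_i\le m_0$ for all $1\le j<n$. An associated history is a sequence $(s_i,a_i,b_i)_{1\le i\le n}$ with $a_i\in\mathbb N$, $b_i\in\mathbb N\setminus\{0\}$, $a_i\ne b_i$, together with index sets $\omega_0=\{0,\dots,m\}$, $\omega_i=\omega_{i-1}\cup\{b_i\}$ if $s_i=1$ and $\omega_i=\omega_{i-1}\setminus\{b_i\}$ if $s_i=-1$, such that: if $s_i=1$ then $a_i\in\omega_{i-1}$ and $b_i=1+\max(m,a_1,b_1,\dots,a_{i-1},b_{i-1})$; if $s_i=-1$ then $a_i\in\omega_{i-1}$ and $b_i\in\omega_{i-1}\setminus\{a_i,0\}$; and if $(s_i,s_{i+1})=(1,-1)$ then $(a_i,b_i)\ne(a_{i+1},b_{i+1})$. Let $S=(n+m)/2$ (all indices used lie in $\{0,\dots,S\}$). Wave vectors: with formal variables $k_1,\dots,k_S\in\mathbb R^d$, set $q^0_0=-\sum_{j=1}^mk_j$, $q^0_j=k_j$ for $1\le j\le m$, $q^0_j=0$ for $m<j\le S$; for $i\ge1$: if $s_i=1$, $q^i_{a_i}=q^{i-1}_{a_i}-k_{b_i}$,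 $q^i_{b_i}=k_{b_i}$, $q^i_j=q^{i-1}_j$ otherwise; if $s_i=-1$, $q^i_{a_i}=q^{i-1}_{a_i}+q^{i-1}_{b_i}$, $q^i_{b_i}=0$, $q^i_j=q^{i-1}_j$ otherwise. Each $q^i_j$ is an integer linear combination of $k_1,\dots,k_S$. For $1\le i<n$, set $\varpi_i=1$ if either $\omega_i\setminus\{0,\dots,m\}\ne\emptyset$, or there exist $1\le j\le m<\ell\le S$ such that the coefficient of $k_\ell$ in $q^i_j$ is nonzero; otherwise $\varpi_i=0$. *)

(* Indices of the abstract/history are 1-based as in the paper:
   s_i = nth 0 s i.-1, a_i = nth 0 a i.-1, b_i = nth 0 b i.-1, n = size s. *)
From mathcomp Require Import all_boot all_order all_algebra.
Set Implicit Arguments. Unset Strict Implicit. Unset Printing Implicit Defensive.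
Import Order.TTheory GRing.Theory Num.Theory.

Local Open Scope ring_scope.

Definition partial_height (m : nat) (s : seq int) (j : nat) : int :=
  m%:Z + \sum_(x <- take j s) x.

Definition is_abstract (m0 m : nat) (s : seq int) : Prop :=
  [/\ (m <= m0)%N,
      all (fun x => (x == 1) || (x == -1)) s,
      m%:Z + \sum_(x <- s) x = 0 &
      forall j : nat, (1 <= j < size s)%N ->
        0 < partial_height m s j <= m0%:Z].

(* the index sets omega_i, as duplicate-free lists of naturals *)
Fixpoint omega (m : nat) (s : seq int) (b : seq nat) (i : nat) : seq nat :=
  match i with
  | 0 => iota 0 m.+1
  | i'.+1 =>
      if nth 0 s i' == 1 then nth 0%N b i' :: omega m s b i'
      else [seq x <- omega m s b i' | x != nth 0%N b i']
  end.

Definition is_history (m : nat) (s : seq int) (a b : seq nat) : Prop :=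
  [/\ size a = size s, size b = size s,
      (forall i : nat, (1 <= i <= size s)%N ->
        let ai := nth 0%N a i.-1 in
        let bi := nth 0%N b i.-1 in
        [/\ (0 < bi)%N, ai != bi,
            (nth 0 s i.-1 = 1 ->
               ai \in omega m s b i.-1 /\
               bi = (maxn m (\max_(k < i.-1) maxn (nth 0%N a k) (nth 0%N b k))).+1) &
            (nth 0 s i.-1 = -1 ->
               [/\ ai \in omega m s b i.-1, bi \in omega m s b i.-1,
                   bi != ai & bi != 0%N])]) &
      (forall i : nat, (1 <= i < size s)%N ->
        nth 0 s i.-1 = 1 -> nth 0 s i = -1 ->
        (nth 0%N a i.-1, nth 0%N b i.-1) != (nth 0%N a i, nth 0%N b i))].

(* Wave vectors: q m s a b i j l is the (integer) coefficient of k_l in q^i_j. *)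
Fixpoint wave (m : nat) (s : seq int) (a b : seq nat) (i : nat) : nat -> nat -> int :=
  match i with
  | 0 => fun j l =>
      if j == 0%N then (if (1 <= l <= m)%N then -1 else 0)
      else if (j <= m)%N && (l == j) then 1 else 0
  | i'.+1 =>
      let p := wave m s a b i' in
      let ai := nth 0%N a i' in
      let bi := nth 0%N b i' in
      if nth 0 s i' == 1 then
        fun j l => if j == ai then p j l - (l == bi)%:Z
                   else if j == bi then (l == bi)%:Z
                   else p j l
      else
        fun j l => if j == ai then p ai l + p bi l
                   else if j == bi then 0
                   else p j l
  end.

Definition bigS (m : nat) (s : seq int) : nat := ((size s + m) %/ 2)%N.

Definition varpi (m : nat) (s : seq int) (a b : seq nat) (i : nat) : bool :=
  has (fun x => (m < x)%N) (omega m s b i)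
  || has (fun j => has (fun l => wave m s a b i j l != 0)
                       (iota m.+1 (bigS m s - m)))
         (iota 1 m).

From mathcomp Require Import all_boot all_algebra.
From mathcomp Require Import zify.
Set Implicit Arguments. Unset Strict Implicit. Unset Printing Implicit Defensive.

(* Let c_k be the number of initial indices 0..m still in omega_k ([surviving]).
   It starts at m+1, never increases (indices added later are fresh, hence > m)
   and stays positive (0 is never removed).  If varpi vanishes at t < t' <= t+3,
   some step in between removes an initial index: varpi_t = 0 forbids fresh
   indices in omega_t, and a fresh index created and removed at once leaves its
   wave vector on an initial q_j.  So consecutive zeros of varpi are at least 4
   apart or cost a decrease of c, whence 4 #{zeros} <= n + 3m. *)

Section DescentCount.

Variables (P : pred nat) (c : nat -> nat) (N : nat).
Hypothesis P0 : P 0.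
Hypothesis c_pos : forall k, k <= N -> 0 < c k.
Hypothesis c_nonincr : forall i j, i <= j <= N -> c j <= c i.
Hypothesis c_drop : forall t t', P t -> P t' -> t < t' <= t + 3 -> t' <= N -> c t' < c t.

Lemma count_iota1S T : count P (iota 1 T.+1) = count P (iota 1 T) + P T.+1.
Proof. by rewrite -(addn1 T) iotaD count_cat /= add1n addn0 addn1. Qed.

Lemma exists_last_index T :
  exists2 T0, T0 <= T & P T0 /\ count P (iota 1 T) = count P (iota 1 T0).
Proof.
elim: T => [|T [T0 le_T0T [PT0 eq_count]]]; first by exists 0.
have [PT | nPT] := boolP (P T.+1); first by exists T.+1.
by exists T0; [apply: leqW | rewrite count_iota1S eq_count (negbTE nPT) addn0].
Qed.

Lemma count_descent_at T : T <= N -> P T ->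
  4 * count P (iota 1 T) + 3 * c T <= T + 3 * c 0.
Proof.
elim/ltn_ind: T => -[_ _ _|T IH le_TN PT]; first by rewrite /=; lia.
have [T0 le_T0T [PT0 eq_count]] := exists_last_index T.
have IH0 := IH T0 le_T0T (leq_trans le_T0T (ltnW le_TN)) PT0.
rewrite count_iota1S PT eq_count.
have [far | near] := leqP (T0 + 4) T.+1.
- have := c_nonincr (i := T0) (j := T.+1); lia.
- have := c_drop PT0 PT; lia.
Qed.

Lemma count_descent T : T <= N -> 4 * count P (iota 1 T) + 3 <= T + 3 * c 0.
Proof.
move=> le_TN; have [T0 le_T0T [PT0 ->]] := exists_last_index T.
have := count_descent_at (leq_trans le_T0T le_TN) PT0.
have := c_pos (leq_trans le_T0T le_TN); lia.
Qed.

End DescentCount.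

Definition max_label (m : nat) (a b : seq nat) (k : nat) : nat :=
  maxn m (\max_(j < k) maxn (nth 0 a j) (nth 0 b j)).

Definition surviving (m : nat) (s : seq int) (b : seq nat) (k : nat) : nat :=
  #|[set x : 'I_m.+1 | val x \in omega m s b k]|.

Definition low_removal (m : nat) (s : seq int) (b : seq nat) (k : nat) : bool :=
  (nth 0%R s k == (-1)%R) && (nth 0 b k <= m).

Lemma max_labelS m a b k :
  max_label m a b k.+1 = maxn (max_label m a b k) (maxn (nth 0 a k) (nth 0 b k)).
Proof. by rewrite /max_label big_ord_recr /= maxnA. Qed.

Lemma mem_omega_plus m s b k x : nth 0%R s k = 1%R ->
  (x \in omega m s b k.+1) = (x == nth 0 b k) || (x \in omega m s b k).
Proof. by move=> /= ->; rewrite eqxx in_cons. Qed.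

Lemma mem_omega_minus m s b k x : nth 0%R s k = (-1)%R ->
  (x \in omega m s b k.+1) = (x != nth 0 b k) && (x \in omega m s b k).
Proof. by move=> /= ->; rewrite mem_filter. Qed.

Lemma omega_le_max_label m s a b k x :
  x \in omega m s b k -> x <= max_label m a b k.
Proof.
elim: k x => [|k IH] x; first by rewrite mem_iota /max_label big_ord0; lia.
rewrite max_labelS /=; case: ifP => _; last by rewrite mem_filter => /andP[_ /IH]; lia.
by rewrite in_cons => /orP[/eqP -> | /IH]; lia.
Qed.

Lemma waveS_plus m s a b k j l : nth 0%R s k = 1%R ->
  wave m s a b k.+1 j l =
    (if j == nth 0%N a k then wave m s a b k j l - (l == nth 0%N b k)%:Z
     else if j == nth 0%N b k then (l == nth 0%N b k)%:Z
     else wave m s a b k j l)%R.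
Proof. by move=> /= ->; rewrite eqxx. Qed.

Lemma waveS_minus m s a b k j l : nth 0%R s k = (-1)%R ->
  wave m s a b k.+1 j l =
    (if j == nth 0%N a k then wave m s a b k (nth 0%N a k) l + wave m s a b k (nth 0%N b k) l
     else if j == nth 0%N b k then 0
     else wave m s a b k j l)%R.
Proof. by move=> /= ->. Qed.

Lemma varpi0 m s a b : ~~ varpi m s a b 0.
Proof.
rewrite /varpi negb_or; apply/andP; split.
  by apply/hasPn => x; rewrite mem_iota; lia.
apply/hasPn => j; rewrite mem_iota => j_range.
apply/hasPn => l; rewrite mem_iota => l_range /=.
by rewrite ifN_eq ?ifN ?andbF ?negbK //; apply/eqP; lia.
Qed.

Lemma nonvarpi_omega_le m s a b k x :
  ~~ varpi m s a b k -> x \in omega m s b k -> x <= m.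
Proof. by rewrite /varpi negb_or => /andP[/hasPn nbig _] /nbig; rewrite -leqNgt. Qed.

Lemma nonvarpi_wave m s a b k j l : ~~ varpi m s a b k ->
  0 < j <= m -> m < l <= bigS m s -> wave m s a b k j l = 0%R.
Proof.
rewrite /varpi negb_or => /andP[_ /hasPn nwave] j_range l_range.
have j_in : j \in iota 1 m by rewrite mem_iota; lia.
have l_in : l \in iota m.+1 (bigS m s - m) by rewrite mem_iota; lia.
by move: (nwave j j_in) => /hasPn/(_ l l_in); rewrite negbK => /eqP.
Qed.

Lemma varpi_wave m s a b k j l :
  0 < j <= m -> m < l <= bigS m s -> wave m s a b k j l != 0%R -> varpi m s a b k.
Proof.
move=> j_range l_range nz; apply/orP; right.
apply/hasP; exists j; first by rewrite mem_iota; lia.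
by apply/hasP; exists l; first by rewrite mem_iota; lia.
Qed.

Lemma surviving_le m s b k : surviving m s b k <= m.+1.
Proof. by rewrite -[m.+1]card_ord max_card. Qed.

Lemma sum_sign_seq (s : seq int) : all (fun x => (x == 1) || (x == -1))%R s ->
  ((2 * count (pred1 1%R) s)%:Z = (size s)%:Z + \sum_(x <- s) x)%R.
Proof.
elim: s => [|x s IH] /=; first by rewrite big_nil.
by case/andP=> /orP[] /eqP -> /IH; rewrite big_cons /=; lia.
Qed.

Section History.

Variables (m0 m : nat) (s : seq int) (a b : seq nat).
Hypothesis abs : is_abstract m0 m s.
Hypothesis hist : is_history m s a b.

Lemma abstract_sign k : k < size s -> nth 0%R s k = 1%R \/ nth 0%R s k = (-1)%R.
Proof.
case: abs => _ /allP signs _ _ lt_ks.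
by case/orP: (signs _ (mem_nth 0%R lt_ks)) => /eqP ->; [left | right].
Qed.

Lemma abstract_count_plus : 2 * count (pred1 1%R) s + m = size s.
Proof. case: abs => _ signs sum_s _; have := sum_sign_seq signs; lia. Qed.

Lemma history_plus k : k < size s -> nth 0%R s k = 1%R ->
  nth 0 a k \in omega m s b k /\ nth 0 b k = (max_label m a b k).+1.
Proof. by case: hist => _ _ step _ lt_ks; case: (step k.+1 lt_ks). Qed.

Lemma history_minus k : k < size s -> nth 0%R s k = (-1)%R ->
  [/\ nth 0 a k \in omega m s b k, nth 0 b k \in omega m s b k,
      nth 0 b k != nth 0 a k & nth 0 b k != 0].
Proof. by case: hist => _ _ step _ lt_ks; case: (step k.+1 lt_ks). Qed.

Lemma history_plus_minus_pair k : k.+1 < size s ->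
  nth 0%R s k = 1%R -> nth 0%R s k.+1 = (-1)%R ->
  (nth 0 a k, nth 0 b k) != (nth 0 a k.+1, nth 0 b k.+1).
Proof. by case: hist => _ _ _ pair lt_ks; exact: (pair k.+1 lt_ks). Qed.

Lemma history_plus_gt k : k < size s -> nth 0%R s k = 1%R -> m < nth 0 b k.
Proof. by move=> lt_ks /(history_plus lt_ks)[_ ->]; rewrite /max_label; lia. Qed.

Lemma mem0_omega k : k <= size s -> 0 \in omega m s b k.
Proof.
elim: k => [|k IH] le_ks; first by rewrite /= in_cons.
have [plus | minus] := abstract_sign le_ks.
  by rewrite mem_omega_plus // IH ?orbT // ltnW.
have [_ _ _ b_neq0] := history_minus le_ks minus.
by rewrite mem_omega_minus // eq_sym b_neq0 IH // ltnW.
Qed.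

Lemma max_labelS_sign k : k < size s ->
  max_label m a b k.+1 = max_label m a b k + (nth 0%R s k == 1%R).
Proof.
move=> lt_ks; rewrite max_labelS.
have [plus | minus] := abstract_sign lt_ks.
- have [a_in ->] := history_plus lt_ks plus.
  have := omega_le_max_label a a_in; rewrite plus eqxx; lia.
- have [a_in b_in _ _] := history_minus lt_ks minus.
  have := omega_le_max_label a a_in; have := omega_le_max_label a b_in.
  rewrite minus; lia.
Qed.

Lemma max_label_take k : k <= size s ->
  max_label m a b k = m + count (pred1 1%R) (take k s).
Proof.
elim: k => [|k IH] le_ks; first by rewrite take0 /max_label big_ord0 maxn0 addn0.
rewrite max_labelS_sign // IH 1?ltnW // (take_nth 0%R le_ks) -cats1 count_cat /=.
lia.
Qed.

Lemma history_plus_le_bigS k : k < size s -> nth 0%R s k = 1%R -> nth 0 b k <= bigS m s.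
Proof.
move=> lt_ks plus; have [_ ->] := history_plus lt_ks plus.
have -> : (max_label m a b k).+1 = max_label m a b k.+1.
  by rewrite max_labelS_sign // plus eqxx addn1.
rewrite max_label_take // /bigS -abstract_count_plus -{2}(cat_take_drop k.+1 s) count_cat.
lia.
Qed.

Lemma surviving_subset k : k < size s ->
  [set x : 'I_m.+1 | val x \in omega m s b k.+1]
    \subset [set x : 'I_m.+1 | val x \in omega m s b k].
Proof.
move=> lt_ks; apply/subsetP => x; rewrite !inE.
have [plus | minus] := abstract_sign lt_ks; last by rewrite mem_omega_minus // => /andP[].
have := history_plus_gt lt_ks plus; have := valP x.
by rewrite mem_omega_plus // => x_le b_gt /orP[/eqP x_eq | //]; move: x_le; rewrite x_eq; lia.
Qed.

Lemma surviving_nonincr i j : i <= j <= size s -> surviving m s b j <= surviving m s b i.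
Proof.
case/andP; elim: j => [|j IH] le_ij le_js; first by move: le_ij; rewrite leqn0 => /eqP ->.
have [le_ij' | eq_ij] := leqP i j; last by have -> : i = j.+1 by lia.
exact: leq_trans (subset_leq_card (surviving_subset le_js)) (IH le_ij' (ltnW le_js)).
Qed.

Lemma surviving_drop k : k < size s -> low_removal m s b k ->
  surviving m s b k.+1 < surviving m s b k.
Proof.
move=> lt_ks /andP[/eqP minus b_le]; apply/proper_card/properP.
split; first exact: surviving_subset.
have [_ b_in _ _] := history_minus lt_ks minus.
by exists (Ordinal (b_le : nth 0 b k < m.+1)); rewrite inE // mem_omega_minus // eqxx.
Qed.

Lemma surviving_gt0 k : k <= size s -> 0 < surviving m s b k.
Proof. by move=> le_ks; apply/card_gt0P; exists ord0; rewrite inE mem0_omega. Qed.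

Lemma history_plus_gt_prev k : k.+1 < size s -> nth 0%R s k.+1 = 1%R ->
  nth 0 b k < nth 0 b k.+1.
Proof. by move=> lt_ks /(history_plus lt_ks)[_ ->]; rewrite max_labelS; lia. Qed.

Lemma nonvarpiS_minus k : k < size s -> ~~ varpi m s a b k.+1 -> nth 0%R s k = (-1)%R.
Proof.
move=> lt_ks nv; have [plus | //] := abstract_sign lt_ks.
have := nonvarpi_omega_le nv (_ : nth 0 b k \in _); rewrite mem_omega_plus // eqxx.
by have := history_plus_gt lt_ks plus; lia.
Qed.

Lemma nonvarpi_minus_low k : k < size s -> ~~ varpi m s a b k ->
  nth 0%R s k = (-1)%R -> low_removal m s b k.
Proof.
move=> lt_ks nv minus; have [_ b_in _ _] := history_minus lt_ks minus.
by rewrite /low_removal minus eqxx (nonvarpi_omega_le nv b_in).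
Qed.

Lemma nonvarpi_rebound t : t.+1 < size s -> ~~ varpi m s a b t ->
  nth 0%R s t = 1%R -> nth 0%R s t.+1 = (-1)%R -> m < nth 0 b t.+1 ->
  nth 0 b t.+1 = nth 0 b t.
Proof.
move=> lt_ts nv plus minus b_gt; have [_ b_in _ _] := history_minus lt_ts minus.
move: b_in; rewrite mem_omega_plus // => /orP[/eqP // | /(nonvarpi_omega_le nv)]; lia.
Qed.

(* The index b_t created at step t and removed at step t+1 leaves k_(b_t) in
   q_(a_t) with coefficient -1, and also in q_(a_(t+1)) with coefficient +1; at
   least one of a_t, a_(t+1) is nonzero since they differ, which is the history
   condition (a_t, b_t) <> (a_(t+1), b_(t+1)). *)
Lemma varpi_rebound t : t.+1 < size s -> ~~ varpi m s a b t ->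
  nth 0%R s t = 1%R -> nth 0%R s t.+1 = (-1)%R -> nth 0 b t.+1 = nth 0 b t ->
  varpi m s a b t.+2.
Proof.
move=> lt_ts nv plus minus eq_b; have lt_t := ltnW lt_ts.
have [a_in _] := history_plus lt_t plus.
have [a'_in _ b_neq_a' _] := history_minus lt_ts minus.
have a_neq_a' : nth 0 a t != nth 0 a t.+1.
  by apply: contraNneq (history_plus_minus_pair lt_ts plus minus) => ->; rewrite eq_b.
move: a'_in b_neq_a'; rewrite mem_omega_plus // eq_b eq_sym => /orP[/eqP -> | a'_in];
  first by rewrite eqxx.
move=> a'_neq_b; have a_le := nonvarpi_omega_le nv a_in.
have a'_le := nonvarpi_omega_le nv a'_in.
have b_gt := history_plus_gt lt_t plus; have b_le := history_plus_le_bigS lt_t plus.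
have [a'0 | a'_neq0] := eqVneq (nth 0 a t.+1) 0.
- apply: (@varpi_wave _ _ _ _ _ (nth 0 a t) (nth 0 b t)); [lia | lia |].
  rewrite waveS_minus // eq_b ifN_eq // ifN_eq; last by apply/eqP; lia.
  by rewrite waveS_plus // !eqxx (nonvarpi_wave nv) //; lia.
- apply: (@varpi_wave _ _ _ _ _ (nth 0 a t.+1) (nth 0 b t)); [lia | lia |].
  rewrite waveS_minus // eq_b eqxx !waveS_plus // ifN_eq 1?eq_sym // ifN_eq 1?eq_sym //.
  rewrite ifN_eq; last by apply/eqP; lia.
  by rewrite eqxx (nonvarpi_wave nv) //; lia.
Qed.

Lemma low_removal_gap1 t : t < size s ->
  ~~ varpi m s a b t -> ~~ varpi m s a b t.+1 -> low_removal m s b t.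
Proof. by move=> lt_ts nv nv1; apply: nonvarpi_minus_low (nonvarpiS_minus lt_ts nv1). Qed.

Lemma low_removal_gap2 t : t.+1 < size s ->
  ~~ varpi m s a b t -> ~~ varpi m s a b t.+2 ->
  low_removal m s b t || low_removal m s b t.+1.
Proof.
move=> lt_ts nv nv2; have minus1 := nonvarpiS_minus lt_ts nv2.
have [plus0 | minus0] := abstract_sign (ltnW lt_ts);
  last by rewrite nonvarpi_minus_low // ltnW.
have [b1_le | b1_gt] := leqP (nth 0 b t.+1) m.
  by rewrite /low_removal minus1 eqxx b1_le orbT.
have eq_b := nonvarpi_rebound lt_ts nv plus0 minus1 b1_gt.
by rewrite (varpi_rebound lt_ts nv plus0 minus1 eq_b) in nv2.
Qed.

Lemma low_removal_gap3 t : t.+2 < size s ->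
  ~~ varpi m s a b t -> ~~ varpi m s a b t.+3 ->
  [|| low_removal m s b t, low_removal m s b t.+1 | low_removal m s b t.+2].
Proof.
move=> lt_ts nv nv3; have lt1 := ltnW lt_ts; have lt0 := ltnW lt1.
have minus2 := nonvarpiS_minus lt_ts nv3.
have [plus0 | minus0] := abstract_sign lt0; last by rewrite nonvarpi_minus_low.
have [b2_le | b2_gt] := leqP (nth 0 b t.+2) m.
  by rewrite /low_removal minus2 eqxx b2_le !orbT.
have [plus1 | minus1] := abstract_sign lt1.
- exfalso; have b01 := history_plus_gt_prev lt1 plus1.
  have b0_gt := history_plus_gt lt0 plus0.
  have [b1_neq | b0_neq] : nth 0 b t.+1 != nth 0 b t.+2 \/ nth 0 b t != nth 0 b t.+2.
    by case: (eqVneq (nth 0 b t.+1) (nth 0 b t.+2)) => [<-|]; [right; apply/eqP; lia | left].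
  + have := nonvarpi_omega_le nv3 (_ : nth 0 b t.+1 \in _).
    by rewrite mem_omega_minus // b1_neq mem_omega_plus // eqxx; lia.
  + have := nonvarpi_omega_le nv3 (_ : nth 0 b t \in _).
    by rewrite mem_omega_minus // b0_neq !mem_omega_plus // eqxx orbT; lia.
- have [b1_le | b1_gt] := leqP (nth 0 b t.+1) m.
    by rewrite /low_removal minus1 eqxx b1_le orbT.
  exfalso; have eq_b := nonvarpi_rebound lt1 nv plus0 minus1 b1_gt.
  have [_ b2_in _ _] := history_minus lt_ts minus2.
  move: b2_in; rewrite mem_omega_minus // mem_omega_plus // eq_b.
  by case/andP=> /negbTE -> /(nonvarpi_omega_le nv); lia.
Qed.

Lemma surviving_lt_low_removal t k t' : t <= k < t' -> t' <= size s ->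
  low_removal m s b k -> surviving m s b t' < surviving m s b t.
Proof.
move=> /andP[le_tk lt_kt'] le_t's low.
have := surviving_drop (leq_trans lt_kt' le_t's) low.
have := @surviving_nonincr k.+1 t'; have := @surviving_nonincr t k; lia.
Qed.

Lemma surviving_nonvarpi_drop t t' : t' < size s ->
  ~~ varpi m s a b t -> ~~ varpi m s a b t' -> t < t' <= t + 3 ->
  surviving m s b t' < surviving m s b t.
Proof.
move=> lt_t's nv nv' range; have le_t's := ltnW lt_t's.
have: t' = t.+1 \/ t' = t.+2 \/ t' = t.+3 by lia.
case=> [|[|]] eq_t'; subst t'.
- apply: (surviving_lt_low_removal _ le_t's (low_removal_gap1 _ nv nv')); lia.
- case/orP: (low_removal_gap2 (ltnW lt_t's) nv nv') => low;
    by apply: (surviving_lt_low_removal _ le_t's low); lia.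
- case/or3P: (low_removal_gap3 (ltnW lt_t's) nv nv') => low;
    by apply: (surviving_lt_low_removal _ le_t's low); lia.
Qed.

End History.

Theorem lemma6p9 (m0 m : nat) (s : seq int) (a b : seq nat) :
  (1 <= m0)%N ->
  is_abstract m0 m s ->
  nth 0%R s 0 = 1%R ->
  is_history m s a b ->
  (4 * count (fun i => ~~ varpi m s a b i) (iota 1 (size s).-1)
     <= size s + 3 * m)%N.
Proof.
move=> _ abs _ hist; set N := (size s).-1.
have c_pos k : k <= N -> 0 < surviving m s b k.
  by move=> le_kN; apply: (surviving_gt0 abs hist); lia.
have c_nonincr i j : i <= j <= N -> surviving m s b j <= surviving m s b i.
  by move=> range; apply: (surviving_nonincr abs hist); lia.
have c_drop t t' : ~~ varpi m s a b t -> ~~ varpi m s a b t' -> t < t' <= t + 3 ->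
    t' <= N -> surviving m s b t' < surviving m s b t.
  by move=> nv nv' range le_t'N; apply: (surviving_nonvarpi_drop abs hist) => //; lia.
have := count_descent (P := fun i => ~~ varpi m s a b i) (varpi0 m s a b)
  c_pos c_nonincr c_drop (leqnn N).
have := surviving_le m s b 0; lia.
Qed.
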